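(* Let $R$ be a $*$-ring and equip the power series ring $R[[x]]$ with the involution $(\sum_{i\ge0}a_ix^i)^*=\sum_{i\ge0}a_i^*x^i$. Then $R[[x]]$ is $*$-clean if and only if $R$ is $*$-clean.
   Context: A $*$-ring is a ring with identity with an involution $*$. A projection is $p$ with $p^2=p=p^*$. A $*$-ring is $*$-clean if every element is a sum of a projection and a unit. *)

From mathcomp Require Import all_boot all_algebra.
Set Implicit Arguments. Unset Strict Implicit. Unset Printing Implicit Defensive.
Import GRing.Theory.
Local Open Scope ring_scope.

Definition is_involution (R : pzRingType) (star : R -> R) : Prop :=
  [/\ forall a b : R, star (a + b) = star a + star b,
      forall a b : R, star (a * b) = star b * star a
    & forall a : R, star (star a) = a].

Definition is_unit_of (T : Type) (mul : T -> T -> T) (one : T) (u : T) : Prop :=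
  exists v : T, mul u v = one /\ mul v u = one.

Definition is_projection_of (T : Type) (mul : T -> T -> T) (star : T -> T) (p : T) : Prop :=
  mul p p = p /\ star p = p.

Definition star_clean_of (T : Type) (add mul : T -> T -> T) (one : T) (star : T -> T) : Prop :=
  forall a : T, exists p u : T,
    is_projection_of mul star p /\ is_unit_of mul one u /\ a = add p u.

Definition star_clean (R : pzRingType) (star : R -> R) : Prop :=
  star_clean_of +%R *%R 1 star.

Definition pseries (R : pzRingType) := nat -> R.

Definition ps_add (R : pzRingType) (f g : pseries R) : pseries R := fun n => f n + g n.
Definition ps_mul (R : pzRingType) (f g : pseries R) : pseries R :=
  fun n => \sum_(i < n.+1) f i * g (n - i)%N.
Definition ps_one (R : pzRingType) : pseries R := fun n => if n == 0%N then 1 else 0.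
Definition ps_star (R : pzRingType) (star : R -> R) (f : pseries R) : pseries R :=
  fun n => star (f n).

Definition ps_star_clean (R : pzRingType) (star : R -> R) : Prop :=
  star_clean_of (@ps_add R) (@ps_mul R) (@ps_one R) (ps_star star).

From mathcomp Require Import all_boot all_algebra.
From Stdlib Require Import FunctionalExtensionality.

(* Taking constant terms is a unital ring map R[[x]] -> R commuting with the
   involutions, so a *-clean decomposition of the constant series [a] yields
   one of [a].  Conversely, write f(0) = e + w with e a projection and w a unit
   of R; then f = e + (f - e), the constant series e is a projection of R[[x]],
   and f - e has the unit w as constant term, hence is invertible in R[[x]]. *)

Set Implicit Arguments.
Unset Strict Implicit.
Unset Printing Implicit Defensive.

Import GRing.Theory.
Local Open Scope ring_scope.

Section CourseOfValuesRecursion.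
Variables (T : Type) (x0 : T) (F : nat -> (nat -> T) -> T).

Fixpoint cov_prefix n : seq T :=
  if n is m.+1 then rcons (cov_prefix m) (F n (nth x0 (cov_prefix m)))
  else [:: F 0 (fun _ => x0)].

Definition cov_rec n := nth x0 (cov_prefix n) n.

Lemma size_cov_prefix n : size (cov_prefix n) = n.+1.
Proof. by elim: n => //= n IHn; rewrite size_rcons IHn. Qed.

Lemma nth_cov_prefix n k : (k <= n)%N -> nth x0 (cov_prefix n) k = cov_rec k.
Proof.
elim: n => [|n IHn]; first by rewrite leqn0 => /eqP ->.
rewrite leq_eqVlt => /orP[/eqP -> //|lt_kn].
by rewrite /= nth_rcons size_cov_prefix lt_kn IHn.
Qed.

Lemma cov_recE n : cov_rec n = F n (fun k => if (k < n)%N then cov_rec k else x0).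
Proof.
case: n => [//|n]; rewrite /cov_rec /= nth_rcons size_cov_prefix ltnn eqxx.
congr F; apply: functional_extensionality => k.
case: ltnP => [lt_kn | le_nk]; first exact: nth_cov_prefix.
by rewrite nth_default // size_cov_prefix.
Qed.

End CourseOfValuesRecursion.

Section PowerSeries.
Variable R : pzRingType.
Implicit Types (f g h u : pseries R) (a : R).

Definition ps_const a : pseries R := fun n => if n == 0%N then a else 0.

Lemma ps_mulE f g n : ps_mul f g n = \sum_(0 <= i < n.+1) f i * g (n - i)%N.
Proof. by rewrite /ps_mul big_mkord. Qed.

Lemma ps_mul_coef0 f g : ps_mul f g 0 = f 0%N * g 0%N.
Proof. by rewrite ps_mulE big_nat1. Qed.

Lemma ps_mulA f g h : ps_mul (ps_mul f g) h = ps_mul f (ps_mul g h).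
Proof.
apply: functional_extensionality => n; rewrite !ps_mulE.
transitivity (\sum_(0 <= i < n.+1) \sum_(0 <= j < n.+1)
   (if (j <= i)%N then f j * g (i - j)%N * h (n - i)%N else 0)).
  apply: eq_big_nat => i /andP[_ lt_in].
  rewrite ps_mulE mulr_suml [RHS](big_cat_nat (n := i.+1)) //=.
  rewrite [X in _ = _ + X]big1_seq ?addr0; last first.
    move=> j /andP[_]; rewrite mem_index_iota => /andP[le_ij _].
    by rewrite leqNgt le_ij.
  by apply: eq_big_nat => j /andP[_]; rewrite ltnS => ->.
rewrite exchange_big_nat; apply: eq_big_nat => j /andP[_ lt_jn].
rewrite ps_mulE mulr_sumr (big_cat_nat (n := j)) //=; last exact: ltnW.
rewrite big1_seq ?add0r; last first.
  move=> i /andP[_]; rewrite mem_index_iota => /andP[_ lt_ij].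
  by rewrite leqNgt lt_ij.
rewrite -{1}(add0n j) big_addn subSn //.
apply: eq_big_nat => k _.
by rewrite leq_addl mulrA addnK addnC subnDA.
Qed.

Lemma ps_mulr1 f : ps_mul f (ps_one R) = f.
Proof.
apply: functional_extensionality => n.
rewrite ps_mulE big_nat_recr //= subnn /ps_one eqxx mulr1 big1_seq ?add0r //.
move=> i /andP[_]; rewrite mem_index_iota => /andP[_ lt_in].
by rewrite subn_eq0 leqNgt lt_in mulr0.
Qed.

Lemma ps_mul1r f : ps_mul (ps_one R) f = f.
Proof.
apply: functional_extensionality => n.
rewrite ps_mulE big_nat_recl //= subn0 /ps_one eqxx mul1r big1_seq ?addr0 //.
by move=> i _; rewrite mul0r.
Qed.

Lemma ps_mul_const a b : ps_mul (ps_const a) (ps_const b) = ps_const (a * b).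
Proof.
apply: functional_extensionality => -[|n]; first exact: ps_mul_coef0.
rewrite ps_mulE big_nat_recl // big1_seq ?addr0 /ps_const /=; first by rewrite mulr0.
by move=> i _; rewrite mul0r.
Qed.

Lemma ps_star_const (star : R -> R) a :
  star 0 = 0 -> ps_star star (ps_const a) = ps_const (star a).
Proof.
by move=> star0; apply: functional_extensionality => -[|n]; rewrite /ps_star /ps_const.
Qed.

(* The coefficients of the inverse are solved for one at a time: the n-th
   coefficient of [u * r] is [u 0 * r n] plus terms involving only [r k], k < n. *)
Lemma ps_right_inverse u w : u 0%N * w = 1 -> exists r, ps_mul u r = ps_one R.
Proof.
move=> uw1.
pose F n (r : nat -> R) :=
  if n is m.+1 then - (w * \sum_(0 <= i < m.+1) u i.+1 * r (m - i)%N) else w.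
exists (cov_rec 0 F); apply: functional_extensionality => -[|n].
  by rewrite ps_mul_coef0 cov_recE.
rewrite ps_mulE big_nat_recl // subn0 cov_recE /= /ps_one /=.
under eq_big_nat => i _ do rewrite ltnS leq_subr.
by rewrite mulrN mulrA uw1 mul1r addNr.
Qed.

Lemma ps_left_inverse u w : w * u 0%N = 1 -> exists l, ps_mul l u = ps_one R.
Proof.
move=> wu1.
pose F n (l : nat -> R) :=
  if n is m.+1 then - ((\sum_(0 <= i < m.+1) l i * u (m.+1 - i)%N) * w) else w.
exists (cov_rec 0 F); apply: functional_extensionality => -[|n].
  by rewrite ps_mul_coef0 cov_recE.
rewrite ps_mulE big_nat_recr // subnn cov_recE /= /ps_one /=.
under [X in _ + - (X * _) * _]eq_big_nat => i /andP[_ lt_in] do rewrite lt_in.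
by rewrite mulNr -mulrA wu1 mulr1 addrN.
Qed.

Lemma ps_unit_coef0 u :
  is_unit_of (@ps_mul R) (ps_one R) u <-> is_unit_of *%R 1 (u 0%N).
Proof.
split=> [[v [uv1 vu1]] | [w [uw1 wu1]]].
  by exists (v 0%N); rewrite -!ps_mul_coef0 uv1 vu1.
have [r ur1] := ps_right_inverse uw1.
have [l lu1] := ps_left_inverse wu1.
have l_eq_r : l = r by rewrite -[l]ps_mulr1 -ur1 -ps_mulA lu1 ps_mul1r.
by exists r; rewrite -{2}l_eq_r.
Qed.

Lemma projection_coef0 (star : R -> R) p :
  is_projection_of (@ps_mul R) (ps_star star) p ->
  is_projection_of *%R star (p 0%N).
Proof.
move=> [pp_p star_p]; split; first by rewrite -ps_mul_coef0 pp_p.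
by rewrite -[RHS](congr1 (fun q => q 0%N) star_p).
Qed.

Lemma projection_const (star : R -> R) e :
  star 0 = 0 -> is_projection_of *%R star e ->
  is_projection_of (@ps_mul R) (ps_star star) (ps_const e).
Proof.
by move=> star0 [ee_e star_e]; split; rewrite ?ps_mul_const ?ps_star_const ?ee_e ?star_e.
Qed.

Lemma star_clean_of_ps_star_clean (star : R -> R) : ps_star_clean star -> star_clean star.
Proof.
move=> clean_ps a.
have [p [u [p_proj [u_unit def_a]]]] := clean_ps (ps_const a).
exists (p 0%N), (u 0%N); split; first exact: projection_coef0.
by split; [exact/ps_unit_coef0 | exact: (congr1 (fun f => f 0%N) def_a)].
Qed.

Lemma ps_star_clean_of_star_clean (star : R -> R) :
  star 0 = 0 -> star_clean star -> ps_star_clean star.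
Proof.
move=> star0 clean f.
have [e [w [e_proj [w_unit def_f0]]]] := clean (f 0%N).
exists (ps_const e), (fun n => f n - ps_const e n).
split; first exact: projection_const.
split; last by apply: functional_extensionality => n; rewrite /ps_add addrC subrK.
by apply/ps_unit_coef0; rewrite /ps_const /= def_f0 addrC addKr.
Qed.

End PowerSeries.

Lemma involution0 (R : pzRingType) (star : R -> R) : is_involution star -> star 0 = 0.
Proof.
move=> [starD _ _]; apply: (@addrI _ (star 0)).
by rewrite addr0 -starD addr0.
Qed.

Theorem proposition2p8 (R : pzRingType) (star : R -> R) :
  is_involution star -> (ps_star_clean star <-> star_clean star).
Proof.
move=> star_inv; split; first exact: star_clean_of_ps_star_clean.
exact/ps_star_clean_of_star_clean/involution0.
Qed.
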